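(* Let $\Sigma$ be a finite set of formulas. In $\mathcal M^{\mathsf{CS4}}_\Sigma$, every chain $\Gamma_0\prec_\Sigma\Gamma_1\prec_\Sigma\cdots\prec_\Sigma\Gamma_n$ satisfies $n\le|\Sigma|$ (so has length at most $|\Sigma|+1$); moreover $\sqsubseteq_c$ is backward confluent with respect to $\preccurlyeq_\Sigma$: whenever $\Phi\sqsubseteq_c\Psi\preccurlyeq_\Sigma\Theta$, there is $\Upsilon\in W_c$ with $\Phi\preccurlyeq_\Sigma\Upsilon\sqsubseteq_c\Theta$.
   Context: Formulas over a countably infinite set $\mathbb P$: $p\mid\bot\mid\varphi\wedge\psi\mid\varphi\vee\psi\mid\varphi\to\psi\mid\Diamond\varphi\mid\Box\varphi$; $\mathcal L$ is the set of all formulas. $\mathsf{CS4}$ is the least set of formulas containing all intuitionistic propositional tautologies and all instances of $\Box(\varphi\to\psi)\to(\Box\varphi\to\Box\psi)$, $\Box(\varphi\to\psi)\to(\Diamond\varphi\to\Diamond\psi)$, $\Box\varphi\to\varphi$, $\varphi\to\Diamond\varphi$, $\Box\varphi\to\Box\Box\varphi$, $\Diamond\Diamond\varphi\to\Diamond\varphi$, closed under modus ponens and necessitation. $\Gamma\vdash\Delta$ means $\mathsf{CS4}\vdash\bigwedge\Gamma'\to\bigvee\Delta'$ for finite $\Gamma'\subseteq\Gamma$, $\Delta'\subseteq\Delta$. A set $X$ is prime if $X\vdash\varphi$ implies $\varphi\in X$ and $\varphi\vee\psi\in X$ implies $\varphi\in X$ or $\psi\in X$. A $\mathsf{CS4}$-theory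 is a pair $\Phi=(\Phi^+;\Phi^\Diamond)$ with $\Phi^+$ prime and $\Diamond\bigvee\Psi\notin\Phi^+$ for every nonempty finite $\Psi\subseteq\Phi^\Diamond$. $\Phi^\Box=\{\varphi:\Box\varphi\in\Phi^+\}$. $W_c$ = all $\mathsf{CS4}$-theories; $W_{\bot c}=\{(\mathcal L;\varnothing)\}$; $\Phi\preccurlyeq_c\Psi$ iff $\Phi^+\subseteq\Psi^+$; $\Phi\sqsubseteq_c\Psi$ iff $\Phi^\Box\subseteq\Psi^+$ and $\Phi^\Diamond\subseteq\Psi^\Diamond$; $V_c(p)=\{\Phi:p\in\Phi^+\}$. For $\Gamma,\Delta\in W_c$, $\Gamma\preccurlyeq_\Sigma\Delta$ iff $\Gamma\preccurlyeq_c\Delta$ and either $\Gamma^+=\Delta^+$ or there is $\chi\in\Sigma$ with $\chi\in\Delta^+\setminus\Gamma^+$; $\Gamma\prec_\Sigma\Delta$ means $\Gamma\preccurlyeq_\Sigma\Delta$ and not $\Delta\preccurlyeq_\Sigma\Gamma$. $\mathcal M^{\mathsf{CS4}}_\Sigma=(W_c,W_{\bot c},\preccurlyeq_\Sigma,\sqsubseteq_c,V_c)$. *)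

From Stdlib Require Import List.
Import ListNotations.

Inductive form : Type :=
| Var : nat -> form
| Bot : form
| And : form -> form -> form
| Or : form -> form -> form
| Imp : form -> form -> form
| Dia : form -> form
| Box : form -> form.

Definition Top : form := Imp Bot Bot.

(* CS4: intuitionistic propositional tautologies (given by a standard
   Hilbert axiomatisation of IPC, all instances over the modal language)
   + the CS4 modal axioms, closed under modus ponens and necessitation. *)
Inductive CS4 : form -> Prop :=
| ax_K1 a b : CS4 (Imp a (Imp b a))
| ax_S a b c : CS4 (Imp (Imp a (Imp b c)) (Imp (Imp a b) (Imp a c)))
| ax_AndI a b : CS4 (Imp a (Imp b (And a b)))
| ax_AndE1 a b : CS4 (Imp (And a b) a)
| ax_AndE2 a b : CS4 (Imp (And a b) b)
| ax_OrI1 a b : CS4 (Imp a (Or a b))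
| ax_OrI2 a b : CS4 (Imp b (Or a b))
| ax_OrE a b c : CS4 (Imp (Imp a c) (Imp (Imp b c) (Imp (Or a b) c)))
| ax_BotE a : CS4 (Imp Bot a)
| ax_KBox a b : CS4 (Imp (Box (Imp a b)) (Imp (Box a) (Box b)))
| ax_KDia a b : CS4 (Imp (Box (Imp a b)) (Imp (Dia a) (Dia b)))
| ax_T a : CS4 (Imp (Box a) a)
| ax_TDia a : CS4 (Imp a (Dia a))
| ax_4 a : CS4 (Imp (Box a) (Box (Box a)))
| ax_4Dia a : CS4 (Imp (Dia (Dia a)) (Dia a))
| r_MP a b : CS4 (Imp a b) -> CS4 a -> CS4 b
| r_Nec a : CS4 a -> CS4 (Box a).

Definition fset := form -> Prop.

Fixpoint bigAnd (l : list form) : form :=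
  match l with [] => Top | a :: l' => And a (bigAnd l') end.
Fixpoint bigOr (l : list form) : form :=
  match l with [] => Bot | a :: l' => Or a (bigOr l') end.

Definition derives (G D : fset) : Prop :=
  exists G' D' : list form,
    (forall x, In x G' -> G x) /\ (forall x, In x D' -> D x) /\
    CS4 (Imp (bigAnd G') (bigOr D')).

Definition prime (X : fset) : Prop :=
  (forall phi, derives X (fun x => x = phi) -> X phi) /\
  (forall phi psi, X (Or phi psi) -> X phi \/ X psi).

Definition is_theory (P D : fset) : Prop :=
  prime P /\
  forall Psi : list form, Psi <> [] -> (forall x, In x Psi -> D x) ->
    ~ P (Dia (bigOr Psi)).

Record theory : Type := Theory {
  tplus : fset;
  tdia : fset;
  theory_ok : is_theory tplus tdia }.

Definition tbox (T : theory) : fset := fun phi => tplus T (Box phi).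

Definition preceq_c (G D : theory) : Prop :=
  forall phi, tplus G phi -> tplus D phi.

Definition sqsub_c (G D : theory) : Prop :=
  (forall phi, tbox G phi -> tplus D phi) /\
  (forall phi, tdia G phi -> tdia D phi).

(* Sigma is a finite set of formulas, given as a duplicate-free list *)
Definition preceq_S (S : list form) (G D : theory) : Prop :=
  preceq_c G D /\
  ((forall phi, tplus G phi <-> tplus D phi) \/
   exists chi, In chi S /\ tplus D chi /\ ~ tplus G chi).

Definition prec_S (S : list form) (G D : theory) : Prop :=
  preceq_S S G D /\ ~ preceq_S S D G.

From Stdlib Require Import List.

(* A strict step G ≺_Σ D cannot be an equality of positive
   parts (that would make D ≼_Σ G), so it adds some χ ∈ Σ to the positive
   part while preserving everything already there.  Along a chain
   Γ_0 ≺_Σ ... ≺_Σ Γ_n we therefore collect n pairwise distinct formulas of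
   Σ, all in Γ_n^+, and a duplicate-free sublist of Σ has length ≤ |Σ|.  Given Φ ⊑_c Ψ ≼_Σ Θ, the theory Υ = (Φ^+; ∅)
   obtained by forgetting the diamond part of Φ is a CS4-theory with the
   same positive part as Φ (so Φ ≼_Σ Υ), and Υ^□ = Φ^□ ⊆ Ψ^+ ⊆ Θ^+ while
   the empty diamond part is trivially included in Θ^◇ (so Υ ⊑_c Θ). *)

Lemma prec_S_adds_formula (S : list form) (G D : theory) :
  prec_S S G D ->
  preceq_c G D /\ exists chi, In chi S /\ tplus D chi /\ ~ tplus G chi.
Proof.
  intros [[Hc [Heq | Hnew]] Hnot].
  - exfalso. apply Hnot. split.
    + intros phi H. apply Heq. exact H.
    + left. intros phi. symmetry. apply Heq.
  - split; assumption.
Qed.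

Lemma prec_S_chain_witnesses (S : list form) (n : nat) (G : nat -> theory) :
  (forall i, i < n -> prec_S S (G i) (G (Datatypes.S i))) ->
  forall i, i <= n ->
  exists L, NoDup L /\ length L = i /\
            forall x, In x L -> In x S /\ tplus (G i) x.
Proof.
  intros Hchain i. induction i as [|i IH]; intros Hi.
  - exists nil. split; [constructor | split; [reflexivity | intros x []]].
  - assert (Hlt : i < n) by exact Hi.
    destruct IH as [L [Hnodup [Hlen Hsub]]]; [apply PeanoNat.Nat.lt_le_incl; exact Hlt |].
    destruct (prec_S_adds_formula _ _ _ (Hchain i Hlt))
      as [Hmono [chi [HchiS [HchiD HchiG]]]].
    exists (chi :: L). split; [| split].
    + constructor; [| exact Hnodup].
      intros HchiL. apply HchiG. apply (Hsub chi HchiL).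
    + simpl. rewrite Hlen. reflexivity.
    + intros x [<- | HxL]; [split; assumption |].
      destruct (Hsub x HxL) as [HxS HxG]. split; [exact HxS | apply Hmono; exact HxG].
Qed.

Lemma prec_S_chain_bound (S : list form) (n : nat) (G : nat -> theory) :
  (forall i, i < n -> prec_S S (G i) (G (Datatypes.S i))) -> n <= length S.
Proof.
  intros Hchain.
  destruct (prec_S_chain_witnesses S n G Hchain n (le_n n)) as [L [Hnodup [Hlen Hsub]]].
  rewrite <- Hlen. apply NoDup_incl_length; [exact Hnodup |].
  intros x Hx. apply (Hsub x Hx).
Qed.

(* The positive part of a theory together with an empty diamond part is again
   a CS4-theory: the diamond condition quantifies over nonempty lists of ∅. *)
Lemma forget_dia_ok (T : theory) : is_theory (tplus T) (fun _ => False).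
Proof.
  split.
  - exact (proj1 (theory_ok T)).
  - intros [| x Ps] Hne Hin; [congruence |].
    exfalso. apply (Hin x). left. reflexivity.
Qed.

Definition forget_dia (T : theory) : theory :=
  Theory (tplus T) (fun _ => False) (forget_dia_ok T).

Lemma preceq_S_forget_dia (S : list form) (T : theory) :
  preceq_S S T (forget_dia T).
Proof.
  split.
  - intros phi H. exact H.
  - left. intros phi. split; intro H; exact H.
Qed.

Lemma sqsub_c_backward_confluent (S : list form) (Phi Psi Theta : theory) :
  sqsub_c Phi Psi -> preceq_S S Psi Theta ->
  exists Ups : theory, preceq_S S Phi Ups /\ sqsub_c Ups Theta.
Proof.
  intros [Hbox _] [Hmono _].
  exists (forget_dia Phi). split.
  - apply preceq_S_forget_dia.
  - split.
    + intros phi H. apply Hmono. apply Hbox. exact H.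
    + intros phi [].
Qed.

Theorem mainTheorem18 (Sigma : list form) (HSigma : NoDup Sigma) :
  (forall (n : nat) (G : nat -> theory),
      (forall i, i < n -> prec_S Sigma (G i) (G (S i))) -> n <= length Sigma) /\
  (forall Phi Psi Theta : theory,
      sqsub_c Phi Psi -> preceq_S Sigma Psi Theta ->
      exists Ups : theory, preceq_S Sigma Phi Ups /\ sqsub_c Ups Theta).
Proof.
  split.
  - exact (prec_S_chain_bound Sigma).
  - exact (sqsub_c_backward_confluent Sigma).
Qed.
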